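(* For every population instance and pool size bound $G$, $$\max_{T\in\mathcal T^3}u(T)\le \tfrac73\max_{T\in\tilde{\mathcal T}^3}u(T)\quad\text{and}\quad \max_{T\in\mathcal T^4}u(T)\le \tfrac{15}{4}\max_{T\in\tilde{\mathcal T}^4}u(T).$$ That is, $\mathrm{gain}(3)\le 7/3$ and $\mathrm{gain}(4)\le 15/4$.
   Context: Population $[n]=\{1,\dots,n\}$. Individual $i$ is healthy with probability $q_i\in[0,1]$, independently, and has utility $u_i\ge0$. For $S\subseteq[n]$, $q_S=\prod_{i\in S}q_i$ ($q_\emptyset=1$). A test is a set $t\subseteq[n]$ with $|t|\le G$; it is negative iff all its members are healthy. A testing regime with budget $B$ is a tuple $T=(t_1,\dots,t_B)$ of tests; $\mathcal T^B$ is the set of all of them and $\tilde{\mathcal T}^B$ the set of non-overlapping ones (tests pairwise disjoint). $P^T_i$ is the probability that $i$ is in at least one negative test of $T$; welfare is $u(T)=\sum_iu_iP^T_i$. $\mathrm{gain}(B)$ is the supremum over instances of $\max_{\mathcal T^B}u/\max_{\tilde{\mathcal T}^B}u$. *)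

From mathcomp Require Import all_boot all_order all_algebra.
Set Implicit Arguments. Unset Strict Implicit. Unset Printing Implicit Defensive.
Import Order.TTheory GRing.Theory Num.Theory.
Local Open Scope ring_scope.

(* Population 'I_n; a health state is the set h of healthy individuals. *)
Definition state_prob (R : realFieldType) (n : nat) (q : 'I_n -> R)
  (h : {set 'I_n}) : R :=
  \prod_(i in h) q i * \prod_(i in ~: h) (1 - q i).

Definition regime (n B : nat) := {ffun 'I_B -> {set 'I_n}}.

Definition valid_regime (n B G : nat) (T : regime n B) : bool :=
  [forall j, #|T j| <= G]%N.

Definition nonoverlapping (n B : nat) (T : regime n B) : bool :=
  [forall j, forall k, (j != k) ==> [disjoint T j & T k]].

Definition negative (n : nat) (t h : {set 'I_n}) : bool := t \subset h.

Definition P_in (R : realFieldType) (n B : nat) (q : 'I_n -> R)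
  (T : regime n B) (i : 'I_n) : R :=
  \sum_(h : {set 'I_n} | [exists j, (i \in T j) && negative (T j) h])
     state_prob q h.

Definition welfare (R : realFieldType) (n B : nat) (q u : 'I_n -> R)
  (T : regime n B) : R :=
  \sum_i u i * P_in q T i.

From mathcomp Require Import all_boot all_order all_algebra.
Import Order.TTheory GRing.Theory Num.Theory.
Set Implicit Arguments. Unset Strict Implicit. Unset Printing Implicit Defensive.
Local Open Scope ring_scope.

(* Let the pattern of an individual be the list of tests of T containing it.
   A plan groups patterns into at most B pairwise disjoint classes, each lying
   inside a common test of T; taking as k-th new test the individuals whose
   pattern is in the k-th class gives a valid non-overlapping regime.  If i is
   in a negative test T_j and its pattern lies in a class inside T_j, then the
   new test containing i is a subset of T_j, hence negative as well.  So if
   plans with weights w_c cover every pair (pattern, j in pattern) with total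
   weight at least D, then P_i^T <= sum_c (w_c / D) P_i^{T_c} for every i, and
   u(T) <= (sum_c w_c / D) max_{non-overlapping T'} u(T').  The explicit
   certificates below achieve sum_c w_c / D = 6/4 for B = 3 and 116/60 for
   B = 4. *)

Definition cleared (n B : nat) (T : regime n B) (i : 'I_n) (h : {set 'I_n}) : bool :=
  [exists j, (i \in T j) && negative (T j) h].

Section Welfare.
Variables (R : realFieldType) (n : nat) (q u : 'I_n -> R).
Hypotheses (q01 : forall i, 0 <= q i <= 1) (u_ge0 : forall i, 0 <= u i).

Lemma state_prob_ge0 (h : {set 'I_n}) : 0 <= state_prob q h.
Proof.
by apply: mulr_ge0; apply: prodr_ge0 => i _; have /andP[q_ge0 q_le1] := q01 i;
  rewrite ?subr_ge0.
Qed.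

Lemma welfare_ge0 B (T : regime n B) : 0 <= welfare q u T.
Proof.
apply: sumr_ge0 => i _; rewrite mulr_ge0 //.
by apply: sumr_ge0 => h _; apply: state_prob_ge0.
Qed.

Lemma P_in_indicator B (T : regime n B) i :
  P_in q T i = \sum_h (cleared T i h)%:R * state_prob q h.
Proof.
rewrite /P_in big_mkcond; apply: eq_bigr => h _.
by rewrite /cleared; case: ifP; rewrite ?mul1r ?mul0r.
Qed.

Lemma P_in_le_mix B B' (T : regime n B) (W : seq (R * regime n B')) i :
  (forall c, c \in W -> 0 <= c.1) ->
  (forall h, cleared T i h -> 1 <= \sum_(c <- W) c.1 * (cleared c.2 i h)%:R) ->
  P_in q T i <= \sum_(c <- W) c.1 * P_in q c.2 i.
Proof.
move=> W_ge0 dom; rewrite P_in_indicator.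
under [X in _ <= X]eq_bigr do rewrite P_in_indicator mulr_sumr.
rewrite exchange_big /=; apply: ler_sum => h _.
under eq_bigr do rewrite mulrA; rewrite -mulr_suml.
apply: ler_wpM2r; first exact: state_prob_ge0.
case: (boolP (cleared T i h)) => [/dom //|_].
by rewrite big_seq sumr_ge0 // => c /W_ge0 c_ge0; rewrite mulr_ge0.
Qed.

Lemma welfare_le_mix B B' (T : regime n B) (W : seq (R * regime n B')) :
  (forall c, c \in W -> 0 <= c.1) ->
  (forall i h, cleared T i h -> 1 <= \sum_(c <- W) c.1 * (cleared c.2 i h)%:R) ->
  welfare q u T <= \sum_(c <- W) c.1 * welfare q u c.2.
Proof.
move=> W_ge0 dom; rewrite /welfare.
under [X in _ <= X]eq_bigr do rewrite mulr_sumr.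
rewrite exchange_big /=; apply: ler_sum => i _.
under eq_bigr do rewrite mulrCA; rewrite -mulr_sumr.
by rewrite ler_wpM2l // P_in_le_mix // => h; apply: dom.
Qed.

Lemma mix_le_best_nonoverlapping B G (W : seq (R * regime n B)) :
  (forall c, c \in W -> [/\ 0 <= c.1, valid_regime G c.2 & nonoverlapping c.2]) ->
  exists T' : regime n B, [/\ valid_regime G T', nonoverlapping T' &
    \sum_(c <- W) c.1 * welfare q u c.2 <= (\sum_(c <- W) c.1) * welfare q u T'].
Proof.
move=> W_ok.
pose admissible (T' : regime n B) := valid_regime G T' && nonoverlapping T'.
have admissible0 : admissible [ffun=> set0].
  apply/andP; split; apply/forallP => j; rewrite ?ffunE ?cards0 //.
  by apply/forallP => k; rewrite !ffunE disjoints_subset sub0set implybT.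
have [T' /andP[T'_valid T'_nonov] T'_best] := arg_maxP (welfare q u) admissible0.
exists T'; split => //; rewrite mulr_suml !big_seq; apply: ler_sum => c.
case/W_ok=> c_ge0 c_valid c_nonov.
by rewrite ler_wpM2l //; apply: T'_best; apply/andP.
Qed.

End Welfare.

Definition class_in_test (A : seq (seq nat)) (j : nat) : bool :=
  all (fun X => j \in X) A.

Definition plan_ok (B : nat) (P : seq (seq (seq nat))) : bool :=
  [&& (size P <= B)%N, all (fun A => has (class_in_test A) (iota 0 B)) P &
      pairwise (fun A A' => ~~ has (mem A') A) P].

Definition covers (P : seq (seq (seq nat))) (X : seq nat) (j : nat) : bool :=
  has (fun A => (X \in A) && class_in_test A j) P.

Lemma pairwise_nth_disjoint (T : eqType) (P : seq (seq T)) k k' :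
  pairwise (fun A A' => ~~ has (mem A') A) P -> k != k' ->
  ~~ has (mem (nth [::] P k')) (nth [::] P k).
Proof.
move=> P_disj neq_kk'; wlog lt_kk' : k k' {neq_kk'} / (k < k')%N.
  by move=> hw; case: (ltngtP k k') neq_kk' => [/hw //|/hw + _|//]; rewrite has_sym.
have [k'P|Pk'] := ltnP k' (size P); last by rewrite (nth_default _ Pk') has_sym.
by move/pairwiseP: P_disj; apply; rewrite ?inE // (ltn_trans lt_kk').
Qed.

Section PlanRegime.
Variables (n B : nat) (T : regime n B).

Definition pattern (x : 'I_n) : seq nat := [seq val j | j <- enum 'I_B & x \in T j].

Lemma mem_pattern x (j : 'I_B) : (val j \in pattern x) = (x \in T j).
Proof. by rewrite (mem_map val_inj) mem_filter mem_enum andbT. Qed.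

Lemma pattern_subseq x : subseq (pattern x) (iota 0 B).
Proof. by rewrite -val_enum_ord map_subseq // filter_subseq. Qed.

Definition class_test (A : seq (seq nat)) : {set 'I_n} := [set x | pattern x \in A].

Lemma class_test_nil : class_test [::] = set0.
Proof. by apply/setP => x; rewrite !inE. Qed.

Lemma class_test_sub A (j : 'I_B) : class_in_test A j -> class_test A \subset T j.
Proof.
by move=> /allP Aj; apply/subsetP => x; rewrite inE => /Aj; rewrite mem_pattern.
Qed.

Definition plan_regime (P : seq (seq (seq nat))) : regime n B :=
  [ffun k : 'I_B => class_test (nth [::] P k)].

Lemma plan_regime_valid G P :
  valid_regime G T -> plan_ok B P -> valid_regime G (plan_regime P).
Proof.
move=> /forallP T_le_G /and3P[_ /allP P_in_tests _]; apply/forallP => k; rewrite ffunE.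
have [kP|Pk] := ltnP k (size P); last by rewrite nth_default // class_test_nil cards0.
have /hasP[j jB Aj] := P_in_tests _ (mem_nth [::] kP).
rewrite mem_iota /= in jB.
exact: leq_trans (subset_leq_card (class_test_sub (j := Ordinal jB) Aj)) (T_le_G _).
Qed.

Lemma plan_regime_nonoverlapping P : plan_ok B P -> nonoverlapping (plan_regime P).
Proof.
case/and3P=> _ _ P_disj; apply/forallP => k; apply/forallP => k'.
apply/implyP => neq_kk'; rewrite !ffunE disjoint_subset.
apply/subsetP => x; rewrite !inE => xk; apply/negP => xk'.
have := pairwise_nth_disjoint P_disj (neq_kk' : val k != val k').
by move/hasPn/(_ _ xk)/negP.
Qed.

Lemma cleared_plan_regime P i (h : {set 'I_n}) (j : 'I_B) :
  (size P <= B)%N -> i \in T j -> T j \subset h -> covers P (pattern i) j ->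
  cleared (plan_regime P) i h.
Proof.
move=> P_le_B ij Tj_h /(has_nthP [::])[k kP /andP[ik Aj]].
apply/existsP; exists (Ordinal (leq_trans kP P_le_B)); rewrite ffunE inE ik /=.
exact: subset_trans (class_test_sub Aj) Tj_h.
Qed.

End PlanRegime.

Fixpoint subseqs (T : Type) (s : seq T) : seq (seq T) :=
  if s is x :: s' then [seq x :: t | t <- subseqs s'] ++ subseqs s' else [:: [::]].

Lemma subseq_subseqs (T : eqType) (s t : seq T) : subseq t s -> t \in subseqs s.
Proof.
case/subseqP=> m _ ->{t}; elim: s m => [|x s IHs] m; first by rewrite mask0.
case: m => [|[] m]; rewrite /= mem_cat ?map_f ?IHs ?orbT //.
by have := IHs [::]; rewrite mask0s => ->; rewrite orbT.
Qed.

Definition plan_cover (B : nat) (W : seq (nat * seq (seq (seq nat)))) (D : nat) :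
    bool :=
  all (fun X => all (fun j => D <= sumn [seq c.1 * covers c.2 X j | c <- W])%N X)
      (subseqs (iota 0 B)).

Lemma cleared_le_plan_mix (R : realFieldType) n B (T : regime n B) W D i h :
  all (fun c => plan_ok B c.2) W -> plan_cover B W D -> (0 < D)%N -> cleared T i h ->
  1 <= \sum_(c <- W) (c.1%:R / D%:R : R) * (cleared (plan_regime T c.2) i h)%:R.
Proof.
move=> /allP W_ok W_cover D_gt0 /existsP[j /andP[ij Tj_h]].
have /allP/(_ j) := allP W_cover _ (subseq_subseqs (pattern_subseq T i)).
rewrite mem_pattern => /(_ ij) D_le_cover.
have D_le_cleared : (D <= \sum_(c <- W) c.1 * cleared (plan_regime T c.2) i h)%N.
  apply: leq_trans D_le_cover _; rewrite sumnE big_map !big_seq; apply: leq_sum => c cW.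
  have /and3P[P_le_B _ _] := W_ok c cW.
  by case cov: covers; rewrite ?muln0 // (cleared_plan_regime P_le_B ij Tj_h cov).
rewrite (_ : \sum_(c <- W) _ =
    (\sum_(c <- W) c.1 * cleared (plan_regime T c.2) i h)%:R / D%:R).
  by rewrite ler_pdivlMr ?ltr0n // mul1r ler_nat.
by rewrite natr_sum mulr_suml; apply: eq_bigr => c _; rewrite natrM mulrAC.
Qed.

Lemma gain_le_certificate (R : realFieldType) n B G (q u : 'I_n -> R)
    (W : seq (nat * seq (seq (seq nat)))) (D a b : nat) (T : regime n B) :
  (forall i, 0 <= q i <= 1) -> (forall i, 0 <= u i) -> valid_regime G T ->
  all (fun c => plan_ok B c.2) W -> plan_cover B W D -> (0 < D)%N -> (0 < a)%N ->
  (sumn (unzip1 W) * a <= b * D)%N ->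
  exists T' : regime n B, [/\ valid_regime G T', nonoverlapping T' &
    welfare q u T <= b%:R / a%:R * welfare q u T'].
Proof.
move=> q01 u_ge0 T_valid W_ok W_cover D_gt0 a_gt0 W_ratio.
pose M := [seq (c.1%:R / D%:R : R, plan_regime T c.2) | c <- W].
have M_ok c : c \in M -> [/\ 0 <= c.1, valid_regime G c.2 & nonoverlapping c.2].
  case/mapP=> c' c'W ->; have c'_ok := allP W_ok c' c'W.
  by split; rewrite /= ?divr_ge0 ?plan_regime_valid ?plan_regime_nonoverlapping.
have [T' [T'_valid T'_nonov M_le_T']] := mix_le_best_nonoverlapping q u M_ok.
exists T'; split => //.
have T_le_M : welfare q u T <= \sum_(c <- M) c.1 * welfare q u c.2.
  apply: welfare_le_mix => // [c /M_ok[] //|i h /cleared_le_plan_mix hdom].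
  by rewrite big_map; apply: hdom.
apply: le_trans T_le_M (le_trans M_le_T' _).
rewrite ler_wpM2r ?welfare_ge0 // big_map -mulr_suml -natr_sum.
rewrite (_ : (\sum_(c <- W) c.1)%N = sumn (unzip1 W)); last by rewrite sumnE big_map.
by rewrite ler_pdivrMr ?ltr0n // mulrAC ler_pdivlMr ?ltr0n // -!natrM ler_nat.
Qed.

Definition plans3 : seq (nat * seq (seq (seq nat))) := [::
  (1, [:: [:: [:: 0]; [:: 0; 2]]; [:: [:: 1]; [:: 0; 1]]; [:: [:: 1; 2]; [:: 0; 1; 2]]]);
  (1, [:: [:: [:: 0]; [:: 0; 1]]; [:: [:: 1]; [:: 1; 2]]; [:: [:: 0; 2]; [:: 0; 1; 2]]]);
  (1, [:: [:: [:: 1]; [:: 0; 1]; [:: 1; 2]]; [:: [:: 2]]; [:: [:: 0; 2]; [:: 0; 1; 2]]]);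
  (1, [:: [:: [:: 1]]; [:: [:: 2]; [:: 0; 2]; [:: 1; 2]]; [:: [:: 0; 1]; [:: 0; 1; 2]]]);
  (1, [:: [:: [:: 0]; [:: 0; 1]]; [:: [:: 2]; [:: 0; 2]]; [:: [:: 1; 2]; [:: 0; 1; 2]]]);
  (1, [:: [:: [:: 0]; [:: 0; 2]]; [:: [:: 2]; [:: 1; 2]]; [:: [:: 0; 1]; [:: 0; 1; 2]]])]%N.

Definition plans4 : seq (nat * seq (seq (seq nat))) := [::
  (10, [:: [:: [:: 0]; [:: 0; 2]; [:: 0; 3]]; [:: [:: 1]; [:: 1; 2]; [:: 1; 3]]; [:: [:: 0; 1]; [:: 0; 1; 2]; [:: 0; 1; 3]; [:: 0; 1; 2; 3]]; [:: [:: 2; 3]; [:: 0; 2; 3]; [:: 1; 2; 3]]]);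
  (3, [:: [:: [:: 0]; [:: 0; 1]; [:: 0; 2; 3]]; [:: [:: 2]; [:: 0; 2]; [:: 1; 2]; [:: 2; 3]; [:: 0; 1; 2]]; [:: [:: 3]; [:: 0; 3]; [:: 1; 3]; [:: 0; 1; 3]]; [:: [:: 1; 2; 3]; [:: 0; 1; 2; 3]]]);
  (5, [:: [:: [:: 1]; [:: 0; 1]; [:: 1; 2]; [:: 1; 3]; [:: 0; 1; 2]; [:: 1; 2; 3]]; [:: [:: 2]; [:: 0; 2]; [:: 0; 2; 3]]; [:: [:: 3]; [:: 0; 3]; [:: 2; 3]]; [:: [:: 0; 1; 3]; [:: 0; 1; 2; 3]]]);
  (2, [:: [:: [:: 0]; [:: 0; 1]; [:: 0; 2]; [:: 0; 3]; [:: 0; 2; 3]]; [:: [:: 2]; [:: 1; 2]]; [:: [:: 3]; [:: 1; 3]; [:: 2; 3]; [:: 0; 1; 3]; [:: 1; 2; 3]]; [:: [:: 0; 1; 2]; [:: 0; 1; 2; 3]]]);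
  (2, [:: [:: [:: 0]; [:: 0; 1]; [:: 0; 2]; [:: 0; 1; 2]]; [:: [:: 1]; [:: 1; 2]; [:: 1; 2; 3]]; [:: [:: 3]; [:: 0; 3]; [:: 1; 3]; [:: 2; 3]; [:: 0; 1; 3]]; [:: [:: 0; 2; 3]; [:: 0; 1; 2; 3]]]);
  (3, [:: [:: [:: 0]; [:: 0; 3]]; [:: [:: 1]; [:: 0; 1]; [:: 1; 2]; [:: 0; 1; 3]; [:: 1; 2; 3]]; [:: [:: 3]; [:: 1; 3]; [:: 2; 3]]; [:: [:: 0; 2]; [:: 0; 1; 2]; [:: 0; 2; 3]; [:: 0; 1; 2; 3]]]);
  (1, [:: [:: [:: 0]; [:: 0; 2]]; [:: [:: 1]; [:: 0; 1]; [:: 1; 3]; [:: 0; 1; 2]; [:: 1; 2; 3]]; [:: [:: 2]; [:: 1; 2]; [:: 2; 3]]; [:: [:: 0; 3]; [:: 0; 1; 3]; [:: 0; 2; 3]; [:: 0; 1; 2; 3]]]);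
  (4, [:: [:: [:: 0]; [:: 0; 3]; [:: 0; 1; 3]]; [:: [:: 1]; [:: 0; 1]; [:: 1; 3]; [:: 0; 1; 2]]; [:: [:: 2]; [:: 0; 2]; [:: 1; 2]]; [:: [:: 2; 3]; [:: 0; 2; 3]; [:: 1; 2; 3]; [:: 0; 1; 2; 3]]]);
  (9, [:: [:: [:: 1]; [:: 0; 1]; [:: 1; 3]]; [:: [:: 2]; [:: 0; 2]; [:: 1; 2]; [:: 2; 3]; [:: 1; 2; 3]]; [:: [:: 0; 3]; [:: 0; 1; 3]; [:: 0; 2; 3]]; [:: [:: 0; 1; 2]; [:: 0; 1; 2; 3]]]);
  (4, [:: [:: [:: 0]; [:: 0; 1]; [:: 0; 2]]; [:: [:: 3]; [:: 0; 3]; [:: 1; 3]; [:: 2; 3]; [:: 0; 2; 3]]; [:: [:: 1; 2]; [:: 0; 1; 2]; [:: 1; 2; 3]]; [:: [:: 0; 1; 3]; [:: 0; 1; 2; 3]]]);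
  (4, [:: [:: [:: 0]; [:: 0; 1]; [:: 0; 2]; [:: 0; 1; 2]]; [:: [:: 2]; [:: 1; 2]; [:: 2; 3]; [:: 0; 2; 3]]; [:: [:: 3]; [:: 0; 3]]; [:: [:: 1; 3]; [:: 0; 1; 3]; [:: 1; 2; 3]; [:: 0; 1; 2; 3]]]);
  (9, [:: [:: [:: 2]; [:: 0; 2]; [:: 1; 2]; [:: 2; 3]]; [:: [:: 3]; [:: 0; 3]; [:: 1; 3]; [:: 1; 2; 3]]; [:: [:: 0; 1]; [:: 0; 1; 2]; [:: 0; 1; 3]]; [:: [:: 0; 2; 3]; [:: 0; 1; 2; 3]]]);
  (2, [:: [:: [:: 0]; [:: 0; 1]; [:: 0; 2]; [:: 0; 3]; [:: 0; 1; 2]]; [:: [:: 1]; [:: 1; 2]; [:: 1; 3]]; [:: [:: 3]; [:: 2; 3]; [:: 0; 1; 3]; [:: 0; 2; 3]]; [:: [:: 1; 2; 3]; [:: 0; 1; 2; 3]]]);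
  (9, [:: [:: [:: 0]; [:: 0; 1]; [:: 0; 3]]; [:: [:: 2]; [:: 1; 2]; [:: 2; 3]]; [:: [:: 0; 2]; [:: 0; 1; 2]; [:: 0; 2; 3]]; [:: [:: 1; 3]; [:: 0; 1; 3]; [:: 1; 2; 3]; [:: 0; 1; 2; 3]]]);
  (2, [:: [:: [:: 1]; [:: 0; 1]; [:: 1; 2]; [:: 0; 1; 2]]; [:: [:: 2]; [:: 0; 2]; [:: 0; 2; 3]]; [:: [:: 3]; [:: 0; 3]; [:: 1; 3]; [:: 2; 3]; [:: 0; 1; 3]]; [:: [:: 1; 2; 3]; [:: 0; 1; 2; 3]]]);
  (3, [:: [:: [:: 1]; [:: 0; 1]; [:: 1; 3]; [:: 0; 1; 3]]; [:: [:: 2]; [:: 0; 2]]; [:: [:: 3]; [:: 0; 3]; [:: 2; 3]; [:: 0; 2; 3]]; [:: [:: 1; 2]; [:: 0; 1; 2]; [:: 1; 2; 3]; [:: 0; 1; 2; 3]]]);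
  (5, [:: [:: [:: 0]; [:: 0; 1]; [:: 0; 2]; [:: 0; 3]]; [:: [:: 1]; [:: 1; 2]; [:: 1; 3]; [:: 0; 1; 3]]; [:: [:: 2]; [:: 0; 1; 2]]; [:: [:: 2; 3]; [:: 0; 2; 3]; [:: 1; 2; 3]; [:: 0; 1; 2; 3]]]);
  (1, [:: [:: [:: 1]; [:: 0; 1]; [:: 1; 3]; [:: 1; 2; 3]]; [:: [:: 2]; [:: 0; 2]; [:: 1; 2]; [:: 0; 1; 2]]; [:: [:: 3]; [:: 2; 3]]; [:: [:: 0; 3]; [:: 0; 1; 3]; [:: 0; 2; 3]; [:: 0; 1; 2; 3]]]);
  (4, [:: [:: [:: 0]; [:: 0; 2]; [:: 0; 3]; [:: 0; 1; 3]; [:: 0; 2; 3]]; [:: [:: 1]; [:: 0; 1]]; [:: [:: 3]; [:: 1; 3]; [:: 2; 3]]; [:: [:: 1; 2]; [:: 0; 1; 2]; [:: 1; 2; 3]; [:: 0; 1; 2; 3]]]);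
  (1, [:: [:: [:: 1]; [:: 0; 1]; [:: 1; 2]; [:: 1; 3]]; [:: [:: 2]; [:: 1; 2; 3]]; [:: [:: 3]; [:: 0; 3]; [:: 2; 3]; [:: 0; 1; 3]]; [:: [:: 0; 2]; [:: 0; 1; 2]; [:: 0; 2; 3]; [:: 0; 1; 2; 3]]]);
  (2, [:: [:: [:: 0]; [:: 0; 1]; [:: 0; 3]; [:: 0; 1; 2]; [:: 0; 1; 3]; [:: 0; 2; 3]]; [:: [:: 1]; [:: 1; 2]; [:: 1; 3]]; [:: [:: 2]; [:: 0; 2]; [:: 2; 3]]; [:: [:: 1; 2; 3]; [:: 0; 1; 2; 3]]]);
  (8, [:: [:: [:: 0]; [:: 0; 1]; [:: 0; 2]]; [:: [:: 3]; [:: 1; 3]; [:: 2; 3]]; [:: [:: 0; 3]; [:: 0; 1; 3]; [:: 0; 2; 3]; [:: 0; 1; 2; 3]]; [:: [:: 1; 2]; [:: 0; 1; 2]; [:: 1; 2; 3]]]);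
  (2, [:: [:: [:: 1]; [:: 0; 1]; [:: 1; 2; 3]]; [:: [:: 2]; [:: 1; 2]; [:: 2; 3]]; [:: [:: 3]; [:: 0; 3]; [:: 1; 3]; [:: 0; 1; 3]]; [:: [:: 0; 2]; [:: 0; 1; 2]; [:: 0; 2; 3]; [:: 0; 1; 2; 3]]]);
  (3, [:: [:: [:: 1]; [:: 0; 1]; [:: 1; 2]; [:: 1; 3]]; [:: [:: 2]; [:: 0; 2]; [:: 2; 3]; [:: 0; 1; 2]]; [:: [:: 0; 3]; [:: 0; 1; 3]; [:: 0; 2; 3]]; [:: [:: 1; 2; 3]; [:: 0; 1; 2; 3]]]);
  (1, [:: [:: [:: 0]; [:: 0; 1]; [:: 0; 2]; [:: 0; 2; 3]]; [:: [:: 1]; [:: 1; 2]; [:: 0; 1; 2]]; [:: [:: 3]; [:: 0; 3]; [:: 1; 3]; [:: 2; 3]; [:: 1; 2; 3]]; [:: [:: 0; 1; 3]; [:: 0; 1; 2; 3]]]);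
  (9, [:: [:: [:: 1]; [:: 0; 1]; [:: 1; 2]]; [:: [:: 3]; [:: 0; 3]; [:: 2; 3]]; [:: [:: 0; 2]; [:: 0; 1; 2]; [:: 0; 2; 3]; [:: 0; 1; 2; 3]]; [:: [:: 1; 3]; [:: 0; 1; 3]; [:: 1; 2; 3]]]);
  (2, [:: [:: [:: 0]; [:: 0; 1]; [:: 0; 3]; [:: 0; 1; 3]]; [:: [:: 2]; [:: 0; 2]; [:: 2; 3]]; [:: [:: 3]; [:: 1; 3]; [:: 0; 2; 3]]; [:: [:: 1; 2]; [:: 0; 1; 2]; [:: 1; 2; 3]; [:: 0; 1; 2; 3]]]);
  (2, [:: [:: [:: 0]; [:: 0; 1]; [:: 0; 2]; [:: 0; 3]; [:: 0; 1; 2]; [:: 0; 2; 3]]; [:: [:: 2]; [:: 1; 2]; [:: 2; 3]; [:: 1; 2; 3]]; [:: [:: 3]; [:: 1; 3]]; [:: [:: 0; 1; 3]; [:: 0; 1; 2; 3]]]);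
  (2, [:: [:: [:: 2]; [:: 0; 2]; [:: 1; 2]]; [:: [:: 3]; [:: 0; 3]; [:: 1; 3]]; [:: [:: 0; 1]; [:: 0; 1; 2]; [:: 0; 1; 3]]; [:: [:: 2; 3]; [:: 0; 2; 3]; [:: 1; 2; 3]; [:: 0; 1; 2; 3]]]);
  (1, [:: [:: [:: 0]; [:: 0; 3]; [:: 0; 1; 2]; [:: 0; 2; 3]]; [:: [:: 1]; [:: 0; 1]; [:: 1; 2]]; [:: [:: 2]; [:: 0; 2]; [:: 2; 3]]; [:: [:: 1; 3]; [:: 0; 1; 3]; [:: 1; 2; 3]; [:: 0; 1; 2; 3]]]);
  (1, [:: [:: [:: 0]; [:: 0; 1]; [:: 0; 3]; [:: 0; 1; 2]]; [:: [:: 2]; [:: 0; 2]; [:: 1; 2]; [:: 2; 3]; [:: 0; 2; 3]]; [:: [:: 3]; [:: 1; 3]; [:: 1; 2; 3]]; [:: [:: 0; 1; 3]; [:: 0; 1; 2; 3]]])]%N.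

Lemma plans3_ok : all (fun c => plan_ok 3 c.2) plans3.
Proof. by vm_compute. Qed.

Lemma plans3_cover : plan_cover 3 plans3 4.
Proof. by vm_compute. Qed.

Lemma plans4_ok : all (fun c => plan_ok 4 c.2) plans4.
Proof. by vm_compute. Qed.

Lemma plans4_cover : plan_cover 4 plans4 60.
Proof. by vm_compute. Qed.

Theorem mainTheorem6 (R : realFieldType) (n G : nat) (q u : 'I_n -> R)
  (hq : forall i, 0 <= q i <= 1) (hu : forall i, 0 <= u i) :
  (forall T : regime n 3, valid_regime G T ->
     exists T' : regime n 3, [/\ valid_regime G T', nonoverlapping T' &
       welfare q u T <= 7%:R / 3%:R * welfare q u T'])
  /\
  (forall T : regime n 4, valid_regime G T ->
     exists T' : regime n 4, [/\ valid_regime G T', nonoverlapping T' &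
       welfare q u T <= 15%:R / 4%:R * welfare q u T']).
Proof.
split=> T T_valid.
  exact: gain_le_certificate hq hu T_valid plans3_ok plans3_cover _ _ _.
exact: gain_le_certificate hq hu T_valid plans4_ok plans4_cover _ _ _.
Qed.
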